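(* Let $R:K\to H$ be an object of $\mathcal C'$. Then $(K,\cdot_K,1_K,\Delta,\epsilon,S_K,\rightharpoonup_R)$ with $a\rightharpoonup_R b:=R(a)\rightharpoonup b$ is a Yetter--Drinfeld post-Hopf algebra, and sending a morphism $(f,g)$ of $\mathcal C'$ to $g$ yields a functor $\mathsf R':\mathcal C'\to\mathcal{YD}\mathrm{PH}(\mathrm{Vec}_\Bbbk)$. Moreover $\mathsf R'$ is right adjoint to the functor $L:\mathcal{YD}\mathrm{PH}(\mathrm{Vec}_\Bbbk)\to\mathcal C'$ sending $(H,\rightharpoonup)$ to $\mathrm{Id}_H:H\to H_\rightharpoonup$ and $g$ to $(g,g)$: for all objects there is a natural bijection $\mathrm{Hom}_{\mathcal C'}\big(L(H',\rightharpoonup'),\,R\big)\cong\mathrm{Hom}_{\mathcal{YD}\mathrm{PH}}\big((H',\rightharpoonup'),\,\mathsf R'(R)\big)$, given by $(f,g)\mapsto g$ with inverse $g\mapsto(R\circ g,\,g)$.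
   Context: Conventions: $\Bbbk$ is a field; algebras are associative unital, coalgebras coassociative counital; Sweedler notation $\Delta(c)=c_1\otimes c_2$ (summation omitted), iterated as $c_1\otimes c_2\otimes c_3$ etc.; $H\otimes H$ carries the tensor product coalgebra structure. Definition (Yetter--Drinfeld post-Hopf algebra). A tuple $(H,\cdot,1,\Delta,\epsilon,S,\rightharpoonup)$ where $(H,\cdot,1)$ is an algebra, $(H,\Delta,\epsilon)$ is a coalgebra on the same vector space, $S:H\to H$ is linear with $x_1\cdot S(x_2)=S(x_1)\cdot x_2=\epsilon(x)1$ for all $x$, and $\rightharpoonup:H\otimes H\to H$ is a coalgebra morphism, such that for all $x,y,z\in H$: (P1) $x\rightharpoonup(y\cdot z)=(x_1\rightharpoonup y)\cdot(x_2\rightharpoonup z)$; (P2) $x\rightharpoonup(y\rightharpoonup z)=\big(x_1\cdot(x_2\rightharpoonup y)\big)\rightharpoonup z$; (P3) the map $\alpha_\rightharpoonup:H\to\mathrm{End}(H)$, $\alpha_\rightharpoonup(x)(y)=x\rightharpoonup y$, is convolution invertible, i.e. there is $\beta_\rightharpoonup:H\to\mathrm{End}(H)$ with $\alpha_\rightharpoonup(x_1)\circ\beta_\rightharpoonup(x_2)=\beta_\rightharpoonup(x_1)\circ\alpha_\rightharpoonup(x_2)=\epsilon(x)\mathrm{Id}_H$; (P4) $\epsilon(a\cdot b)=\epsilon(a)\epsilon(b)$, $\epsilon(1)=1_\Bbbk$, $\Delta(1)=1\otimes 1$; (P5) $\Delta(x\cdot y)=\Big(x_1\cdot\alpha_\rightharpoonup(x_2)\big(\beta_\rightharpoonup(x_4)(y_1)\big)\Big)\otimes(x_3\cdot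 y_2)$; (P6) setting $x\bullet_\rightharpoonup y:=x_1\cdot(x_2\rightharpoonup y)$, $S_\rightharpoonup(x):=\beta_\rightharpoonup(x_1)(S(x_2))$ and $x\leftharpoonup y:=\big(S_\rightharpoonup(x_1\rightharpoonup y_1)\bullet_\rightharpoonup x_2\big)\bullet_\rightharpoonup y_2$, one has $\Delta(S_\rightharpoonup(x))=S_\rightharpoonup(x_2)\otimes S_\rightharpoonup(x_1)$ and $(x_1\rightharpoonup y_1)\otimes(x_2\leftharpoonup y_2)=(x_2\rightharpoonup y_2)\otimes(x_1\leftharpoonup y_1)$. A morphism of Yetter--Drinfeld post-Hopf algebras $(H,\rightharpoonup)\to(H',\rightharpoonup')$ is an algebra and coalgebra morphism $g$ with $g(x\rightharpoonup y)=g(x)\rightharpoonup' g(y)$; these form $\mathcal{YD}\mathrm{PH}(\mathrm{Vec}_\Bbbk)$. The subadjacent Hopf algebra is $H_\rightharpoonup=(H,\bullet_\rightharpoonup,1,\Delta,\epsilon,S_\rightharpoonup)$, and $H$ is a Hopf monoid in ${}^{H_\rightharpoonup}_{H_\rightharpoonup}\mathcal{YD}$ via action $\rightharpoonup$ and coaction $a\mapsto a_1\bullet_\rightharpoonup S_\rightharpoonup(a_3)\otimes a_2$. Yetter--Drinfeld modules: for a Hopf algebra $A$ with antipode $T$, a left-left Yetter--Drinfeld module is a left $A$-module $(V,\triangleright)$ and left $A$-comodule $\rho(v)=v_{-1}\otimes v_0$ with $\rho(a\triangleright v)=a_1v_{-1}T(a_3)\otimes a_2\triangleright v_0$; these form the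 braided monoidal category ${}^A_A\mathcal{YD}$ with braiding $\sigma(v\otimes w)=v_{-1}\triangleright w\otimes v_0$. A bimonoid in ${}^A_A\mathcal{YD}$ is an object with algebra and coalgebra structure maps in ${}^A_A\mathcal{YD}$, $\epsilon$ multiplicative, $\epsilon(1)=1$, $\Delta(1)=1\otimes1$, and $\Delta\circ m=(m\otimes m)(\mathrm{Id}\otimes\sigma\otimes\mathrm{Id})(\Delta\otimes\Delta)$; a Hopf monoid is a bimonoid with antipode. Definition (Yetter--Drinfeld relative pre-Rota--Baxter operator). Let $(H,\cdot,1,\Delta,\epsilon,S_H)$ be a Hopf algebra and $(K,\cdot_K,1_K,\Delta,\epsilon)$ a bimonoid in ${}^H_H\mathcal{YD}$ with $H$-action $\rightharpoonup$. A coalgebra morphism $R:K\to H$ is a Yetter--Drinfeld relative pre-Rota--Baxter operator if for all $a,b\in K$: (RB1) $R(a)\cdot R(b)=R\big(a_1\cdot_K(R(a_2)\rightharpoonup b)\big)$; (RB2) $S_HR(R(a_1)\rightharpoonup b_1)\cdot R(a_2)\cdot R(b_2)\otimes R(R(a_3)\rightharpoonup b_3)=S_HR(R(a_2)\rightharpoonup b_2)\cdot R(a_3)\cdot R(b_3)\otimes R(R(a_1)\rightharpoonup b_1)$. A morphism from $R:K\to H$ to $R':K'\to H'$ is a pair $(f:H\to H',g:K\to K')$ of algebra and coalgebra morphisms with $fR=R'g$ and $g(h\rightharpoonup k)=f(h)\rightharpoonup' g(k)$. $\mathcal C'$ is the full subcategory of Yetter--Drinfeld relative pre-Rota--Baxter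 operators whose objects are the injective $R:K\to H$ such that $K$ is a Hopf monoid in ${}^H_H\mathcal{YD}$ (with antipode $S_K$) and the $H$-coaction on $K$ is $a\mapsto R(a_1)\cdot S_H(R(a_3))\otimes a_2$. (For $(H,\rightharpoonup)$ a Yetter--Drinfeld post-Hopf algebra, $\mathrm{Id}_H:H\to H_\rightharpoonup$ is an object of $\mathcal C'$.) *)

(* Tensors are represented as formal sums of elementary tensors (seq of pairs /
   triples); equality in V (x) W is the universal-property equality: two formal
   sums are equal iff every bilinear map (into every k-vector space) takes the
   same value on them.  Sweedler sums are sums over these formal sums. *)
From HB Require Import structures.
From mathcomp Require Import all_boot all_algebra.
From Stdlib Require Import ClassicalEpsilon.
Set Implicit Arguments. Unset Strict Implicit. Unset Printing Implicit Defensive.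
Import GRing.Theory.
Local Open Scope ring_scope.

Section YD.
Variable k : fieldType.

Definition lin (V W : lmodType k) (f : V -> W) : Prop :=
  forall (a : k) (x y : V), f (a *: x + y) = a *: f x + f y.
Definition bilin (V W U : lmodType k) (b : V -> W -> U) : Prop :=
  (forall x, lin (b x)) /\ (forall y, lin (fun x => b x y)).
Definition trilin (V1 V2 V3 U : lmodType k) (t : V1 -> V2 -> V3 -> U) : Prop :=
  (forall x y, lin (t x y)) /\ (forall x z, lin (fun y => t x y z)) /\
  (forall y z, lin (fun x => t x y z)).

Definition teq2 (V W : lmodType k) (s t : seq (V * W)) : Prop :=
  forall (U : lmodType k) (b : V -> W -> U), bilin b ->
    \sum_(p <- s) b p.1 p.2 = \sum_(p <- t) b p.1 p.2.
Definition teq3 (V1 V2 V3 : lmodType k) (s t : seq (V1 * V2 * V3)) : Prop :=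
  forall (U : lmodType k) (c : V1 -> V2 -> V3 -> U), trilin c ->
    \sum_(p <- s) c p.1.1 p.1.2 p.2 = \sum_(p <- t) c p.1.1 p.1.2 p.2.
Definition tscale (V W : lmodType k) (a : k) (s : seq (V * W)) : seq (V * W) :=
  [seq (a *: p.1, p.2) | p <- s].
Definition tlin (V W U : lmodType k) (f : V -> seq (W * U)) : Prop :=
  forall a x y, teq2 (f (a *: x + y)) (tscale a (f x) ++ f y).

(* x1 (x) x2 (x) x3 := (Delta (x) id) Delta x *)
Definition sw3 (V : lmodType k) (cop : V -> seq (V * V)) (x : V) : seq (V * V * V) :=
  flatten [seq [seq (q.1, q.2, p.2) | q <- cop p.1] | p <- cop x].
(* (id (x) Delta) Delta x *)
Definition sw3r (V : lmodType k) (cop : V -> seq (V * V)) (x : V) : seq (V * V * V) :=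
  flatten [seq [seq (p.1, q.1, q.2) | q <- cop p.2] | p <- cop x].
Definition sw4 (V : lmodType k) (cop : V -> seq (V * V)) (x : V) : seq (V * V * V * V) :=
  flatten [seq [seq (q.1, q.2, p.1.2, p.2) | q <- cop p.1.1] | p <- sw3 cop x].

Definition is_alg (V : lmodType k) (mul : V -> V -> V) (one : V) : Prop :=
  bilin mul /\ (forall x y z, mul x (mul y z) = mul (mul x y) z) /\
  (forall x, mul one x = x /\ mul x one = x).

Definition is_coalg (V : lmodType k) (cop : V -> seq (V * V)) (eps : V -> k) : Prop :=
  lin (eps : V -> k^o) /\ tlin cop /\ (forall x, teq3 (sw3 cop x) (sw3r cop x)) /\
  (forall x, \sum_(p <- cop x) eps p.1 *: p.2 = x /\ \sum_(p <- cop x) eps p.2 *: p.1 = x).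

Definition is_antipode (V : lmodType k) (mul : V -> V -> V) (one : V)
    (cop : V -> seq (V * V)) (eps : V -> k) (S : V -> V) : Prop :=
  lin S /\ forall x, \sum_(p <- cop x) mul p.1 (S p.2) = eps x *: one /\
                     \sum_(p <- cop x) mul (S p.1) p.2 = eps x *: one.

Definition unit_counit_compat (V : lmodType k) (mul : V -> V -> V) (one : V)
    (cop : V -> seq (V * V)) (eps : V -> k) : Prop :=
  (forall a b, eps (mul a b) = eps a * eps b) /\ eps one = 1 /\
  teq2 (cop one) [:: (one, one)].

Definition is_hopf (V : lmodType k) (mul : V -> V -> V) (one : V)
    (cop : V -> seq (V * V)) (eps : V -> k) (S : V -> V) : Prop :=
  is_alg mul one /\ is_coalg cop eps /\ unit_counit_compat mul one cop eps /\
  (forall x y, teq2 (cop (mul x y)) [seq (mul p.1 q.1, mul p.2 q.2) | p <- cop x, q <- cop y]) /\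
  is_antipode mul one cop eps S.

Definition alg_hom (V W : lmodType k) (mulV : V -> V -> V) (oneV : V)
    (mulW : W -> W -> W) (oneW : W) (g : V -> W) : Prop :=
  lin g /\ (forall x y, g (mulV x y) = mulW (g x) (g y)) /\ g oneV = oneW.

Definition coalg_hom (V W : lmodType k) (copV : V -> seq (V * V)) (epsV : V -> k)
    (copW : W -> seq (W * W)) (epsW : W -> k) (g : V -> W) : Prop :=
  lin g /\ (forall x, teq2 (copW (g x)) [seq (g p.1, g p.2) | p <- copV x]) /\
  (forall x, epsW (g x) = epsV x).

(* m : V (x) V -> V (given as a bilinear map) is a coalgebra morphism, where
   V (x) V carries the tensor product coalgebra structure *)
Definition coalg_hom2 (V : lmodType k) (cop : V -> seq (V * V)) (eps : V -> k)
    (m : V -> V -> V) : Prop :=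
  bilin m /\
  (forall x y, teq2 (cop (m x y)) [seq (m p.1 q.1, m p.2 q.2) | p <- cop x, q <- cop y]) /\
  (forall x y, eps (m x y) = eps x * eps y).

Local Unset Implicit Arguments.
Record YDPHData := {
  Pc : lmodType k;
  Pmul : Pc -> Pc -> Pc;
  Pone : Pc;
  Pcop : Pc -> seq (Pc * Pc);
  Peps : Pc -> k;
  PS : Pc -> Pc;
  Pact : Pc -> Pc -> Pc }.
Local Set Implicit Arguments.

Definition conv_inv (V : lmodType k) (cop : V -> seq (V * V)) (eps : V -> k)
    (act beta : V -> V -> V) : Prop :=
  bilin beta /\
  forall x y, \sum_(p <- cop x) act p.1 (beta p.2 y) = eps x *: y /\
              \sum_(p <- cop x) beta p.1 (act p.2 y) = eps x *: y.

Definition bullet (V : lmodType k) (mul : V -> V -> V) (cop : V -> seq (V * V))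
    (act : V -> V -> V) (x y : V) : V :=
  \sum_(p <- cop x) mul p.1 (act p.2 y).
Definition Sharp (V : lmodType k) (cop : V -> seq (V * V)) (S : V -> V)
    (beta : V -> V -> V) (x : V) : V :=
  \sum_(p <- cop x) beta p.1 (S p.2).
Definition lharp (V : lmodType k) (mul : V -> V -> V) (cop : V -> seq (V * V))
    (S : V -> V) (act beta : V -> V -> V) (x y : V) : V :=
  \sum_(p <- cop x) \sum_(q <- cop y)
     bullet mul cop act (bullet mul cop act (Sharp cop S beta (act p.1 q.1)) p.2) q.2.

Definition is_YDPH_ops (V : lmodType k) (mul : V -> V -> V) (one : V)
    (cop : V -> seq (V * V)) (eps : V -> k) (S : V -> V) (act : V -> V -> V) : Prop :=
  is_alg mul one /\ is_coalg cop eps /\ is_antipode mul one cop eps S /\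
  coalg_hom2 cop eps act /\
  (forall x y z, act x (mul y z) = \sum_(p <- cop x) mul (act p.1 y) (act p.2 z)) /\
  (forall x y z, act x (act y z) = act (bullet mul cop act x y) z) /\
  unit_counit_compat mul one cop eps /\
  (* (P3): a convolution inverse beta exists; (P5), (P6) are stated with it
     (it is unique) *)
  exists beta : V -> V -> V, conv_inv cop eps act beta /\
    (forall x y, teq2 (cop (mul x y))
       [seq (mul p.1.1.1 (act p.1.1.2 (beta p.2 q.1)), mul p.1.2 q.2)
          | p <- sw4 cop x, q <- cop y]) /\
    (forall x, teq2 (cop (Sharp cop S beta x))
                    [seq (Sharp cop S beta p.2, Sharp cop S beta p.1) | p <- cop x]) /\
    (forall x y, teq2
       [seq (act p.1 q.1, lharp mul cop S act beta p.2 q.2) | p <- cop x, q <- cop y]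
       [seq (act p.2 q.2, lharp mul cop S act beta p.1 q.1) | p <- cop x, q <- cop y]).

Definition is_YDPH (P : YDPHData) : Prop :=
  is_YDPH_ops (Pmul P) (Pone P) (Pcop P) (Peps P) (PS P) (Pact P).

Definition YDPH_hom (P Q : YDPHData) (g : Pc P -> Pc Q) : Prop :=
  alg_hom (Pmul P) (Pone P) (Pmul Q) (Pone Q) g /\
  coalg_hom (Pcop P) (Peps P) (Pcop Q) (Peps Q) g /\
  (forall x y, g (Pact P x y) = Pact Q (g x) (g y)).

Definition is_YDmod (A V : lmodType k) (mulA : A -> A -> A) (oneA : A)
    (copA : A -> seq (A * A)) (epsA : A -> k) (SA : A -> A)
    (act : A -> V -> V) (coact : V -> seq (A * V)) : Prop :=
  bilin act /\ (forall v, act oneA v = v) /\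
  (forall a b v, act (mulA a b) v = act a (act b v)) /\
  tlin coact /\
  (forall v, teq3 (flatten [seq [seq (q.1, q.2, p.2) | q <- copA p.1] | p <- coact v])
                  (flatten [seq [seq (p.1, q.1, q.2) | q <- coact p.2] | p <- coact v])) /\
  (forall v, \sum_(p <- coact v) epsA p.1 *: p.2 = v) /\
  (forall a v, teq2 (coact (act a v))
     [seq (mulA (mulA p.1.1 q.1) (SA p.2), act p.1.2 q.2) | p <- sw3 copA a, q <- coact v]).

(* K is a Hopf monoid in the braided category  ^A_A YD  (braiding
   sigma(v (x) w) = v_{-1} -> w (x) v_0) *)
Definition is_YDHopf_monoid (A K : lmodType k) (mulA : A -> A -> A) (oneA : A)
    (copA : A -> seq (A * A)) (epsA : A -> k) (SA : A -> A)
    (act : A -> K -> K) (coact : K -> seq (A * K))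
    (mulK : K -> K -> K) (oneK : K) (copK : K -> seq (K * K)) (epsK : K -> k)
    (SK : K -> K) : Prop :=
  is_YDmod mulA oneA copA epsA SA act coact /\
  is_alg mulK oneK /\ is_coalg copK epsK /\
  (forall h a b, act h (mulK a b) = \sum_(p <- copA h) mulK (act p.1 a) (act p.2 b)) /\
  (forall a b, teq2 (coact (mulK a b))
                    [seq (mulA p.1 q.1, mulK p.2 q.2) | p <- coact a, q <- coact b]) /\
  (forall h, act h oneK = epsA h *: oneK) /\ teq2 (coact oneK) [:: (oneA, oneK)] /\
  (forall h a, teq2 (copK (act h a))
                    [seq (act p.1 q.1, act p.2 q.2) | p <- copA h, q <- copK a]) /\
  (forall a, teq3 (flatten [seq [seq (p.1, q.1, q.2) | q <- copK p.2] | p <- coact a])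
                  (flatten [seq [seq (mulA p.1 q.1, p.2, q.2)
                                   | p <- coact r.1, q <- coact r.2] | r <- copK a])) /\
  (forall h a, epsK (act h a) = epsA h * epsK a) /\
  (forall a, \sum_(p <- coact a) epsK p.2 *: p.1 = epsK a *: oneA) /\
  unit_counit_compat mulK oneK copK epsK /\
  (forall a b, teq2 (copK (mulK a b))
     (flatten [seq [seq (mulK p.1 (act r.1 q.1), mulK r.2 q.2)
                      | r <- coact p.2, q <- copK b] | p <- copK a])) /\
  is_antipode mulK oneK copK epsK SK /\
  (forall h a, act h (SK a) = SK (act h a)) /\
  (forall a, teq2 (coact (SK a)) [seq (p.1, SK p.2) | p <- coact a]).

Local Unset Implicit Arguments.
Record RBData := {
  Hc : lmodType k;
  Hmul : Hc -> Hc -> Hc;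
  Hone : Hc;
  Hcop : Hc -> seq (Hc * Hc);
  Heps : Hc -> k;
  HS : Hc -> Hc;
  Kc : lmodType k;
  Kmul : Kc -> Kc -> Kc;
  Kone : Kc;
  Kcop : Kc -> seq (Kc * Kc);
  Keps : Kc -> k;
  KS : Kc -> Kc;
  Kact : Hc -> Kc -> Kc;
  Rop : Kc -> Hc }.
Local Set Implicit Arguments.

(* the coaction imposed in C':  a |-> R(a1) S_H(R(a3)) (x) a2 *)
Definition Kcoact (O : RBData) (a : Kc O) : seq (Hc O * Kc O) :=
  [seq (Hmul O (Rop O p.1.1) (HS O (Rop O p.2)), p.1.2) | p <- sw3 (Kcop O) a].

Definition RB1 (O : RBData) : Prop :=
  forall a b, Hmul O (Rop O a) (Rop O b)
            = Rop O (\sum_(p <- Kcop O a) Kmul O p.1 (Kact O (Rop O p.2) b)).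
Definition RB2 (O : RBData) : Prop :=
  let R := Rop O in let m := Hmul O in let S := HS O in let act := Kact O in
  forall a b, teq2
    [seq (m (m (S (R (act (R p.1.1) q.1.1))) (R p.1.2)) (R q.1.2), R (act (R p.2) q.2))
       | p <- sw3 (Kcop O) a, q <- sw3 (Kcop O) b]
    [seq (m (m (S (R (act (R p.1.2) q.1.2))) (R p.2)) (R q.2), R (act (R p.1.1) q.1.1))
       | p <- sw3 (Kcop O) a, q <- sw3 (Kcop O) b].

Definition in_Cprime (O : RBData) : Prop :=
  is_hopf (Hmul O) (Hone O) (Hcop O) (Heps O) (HS O) /\
  is_YDHopf_monoid (Hmul O) (Hone O) (Hcop O) (Heps O) (HS O) (Kact O) (@Kcoact O)
                   (Kmul O) (Kone O) (Kcop O) (Keps O) (KS O) /\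
  coalg_hom (Kcop O) (Keps O) (Hcop O) (Heps O) (Rop O) /\
  injective (Rop O) /\ RB1 O /\ RB2 O.

Definition Cmor (O1 O2 : RBData) (f : Hc O1 -> Hc O2) (g : Kc O1 -> Kc O2) : Prop :=
  alg_hom (Hmul O1) (Hone O1) (Hmul O2) (Hone O2) f /\
  coalg_hom (Hcop O1) (Heps O1) (Hcop O2) (Heps O2) f /\
  alg_hom (Kmul O1) (Kone O1) (Kmul O2) (Kone O2) g /\
  coalg_hom (Kcop O1) (Keps O1) (Kcop O2) (Keps O2) g /\
  (forall a, f (Rop O1 a) = Rop O2 (g a)) /\
  (forall h a, g (Kact O1 h a) = Kact O2 (f h) (g a)).

Definition Rprime (O : RBData) : YDPHData :=
  {| Pc := Kc O; Pmul := Kmul O; Pone := Kone O; Pcop := Kcop O; Peps := Keps O;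
     PS := KS O; Pact := fun a b => Kact O (Rop O a) b |}.

(* the (unique) convolution inverse beta of alpha_->, chosen by choice *)
Definition beta_of (P : YDPHData) : Pc P -> Pc P -> Pc P :=
  epsilon (inhabits (fun _ y => y)) (conv_inv (Pcop P) (Peps P) (Pact P)).

Definition Lobj (P : YDPHData) : RBData :=
  {| Hc := Pc P; Hmul := bullet (Pmul P) (Pcop P) (Pact P); Hone := Pone P;
     Hcop := Pcop P; Heps := Peps P; HS := Sharp (Pcop P) (PS P) (@beta_of P);
     Kc := Pc P; Kmul := Pmul P; Kone := Pone P; Kcop := Pcop P; Keps := Peps P;
     KS := PS P; Kact := Pact P; Rop := fun x => x |}.

End YD.

Arguments Pc {k}. Arguments Pmul {k}. Arguments Pone {k}. Arguments Pcop {k}.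
Arguments Peps {k}. Arguments PS {k}. Arguments Pact {k}.
Arguments Hc {k}. Arguments Hmul {k}. Arguments Hone {k}. Arguments Hcop {k}.
Arguments Heps {k}. Arguments HS {k}. Arguments Kc {k}. Arguments Kmul {k}.
Arguments Kone {k}. Arguments Kcop {k}. Arguments Keps {k}. Arguments KS {k}.
Arguments Kact {k}. Arguments Rop {k}.
Arguments Cmor {k} O1 O2 f g. Arguments YDPH_hom {k} P Q g.
Arguments in_Cprime {k} O. Arguments is_YDPH {k} P.
Arguments Rprime {k} O. Arguments Lobj {k} P.

From HB Require Import structures.
From mathcomp Require Import all_boot all_algebra.
From mathcomp Require Import boolp classical_sets.
Set Implicit Arguments. Unset Strict Implicit. Unset Printing Implicit Defensive.
Import GRing.Theory.
Local Open Scope ring_scope.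

(* The subadjacent product a .R b := a_1 (R(a_2) -> b) of K satisfies
   R(a .R b) = R(a) R(b) by (RB1), and the antipode
   S_R(a) := S_H(R a_1) -> S_K(a_2) satisfies R(S_R a) = S_H(R a).  As R is an
   injective linear map it reflects equalities in K (x) K, so the two
   comultiplicativity conditions (P6) are transported from the
   anti-comultiplicativity of S_H and from (RB2).  The other axioms come from
   the Yetter--Drinfeld Hopf monoid structure of K, the convolution inverse of
   x |-> (R x -> -) being x |-> (S_H(R x) -> -).  The adjunction is formal: in
   a morphism (f, g) out of Id_H one has f = f o Id = R o g. *)

Section Linearity.
Variable k : fieldType.
Implicit Types U V W : lmodType k.

Lemma linD V W (f : V -> W) : lin f -> forall x y, f (x + y) = f x + f y.
Proof. by move=> hf x y; rewrite -[x in f (x + _)]scale1r hf scale1r. Qed.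

Lemma lin0 V W (f : V -> W) : lin f -> f 0 = 0.
Proof.
move=> hf; apply: (@addrI _ (f 0)).
by rewrite -linD ?addr0.
Qed.

Lemma linZ V W (f : V -> W) : lin f -> forall a x, f (a *: x) = a *: f x.
Proof. by move=> hf a x; rewrite -[a *: x]addr0 hf lin0 // addr0. Qed.

Lemma lin_sum V W (f : V -> W) : lin f ->
  forall (T : Type) (s : seq T) (F : T -> V), f (\sum_(i <- s) F i) = \sum_(i <- s) f (F i).
Proof.
move=> hf T s F; elim: s => [|a s IH]; first by rewrite !big_nil lin0.
by rewrite !big_cons linD // IH.
Qed.

Lemma bilinZl U V W (b : U -> V -> W) : bilin b -> forall a x y, b (a *: x) y = a *: b x y.
Proof. by move=> [_ hb] a x y; rewrite (linZ (hb y)). Qed.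

Lemma bilinZr U V W (b : U -> V -> W) : bilin b -> forall a x y, b x (a *: y) = a *: b x y.
Proof. by move=> [hb _] a x y; rewrite (linZ (hb x)). Qed.

Definition sweedler V (M : nmodType) (c : V -> seq (V * V)) (x : V) (F : V -> V -> M) : M :=
  \sum_(p <- c x) F p.1 p.2.

Definition quadlin (V1 V2 V3 V4 U : lmodType k) (F : V1 -> V2 -> V3 -> V4 -> U) : Prop :=
  (forall a b c, lin (F a b c)) /\ (forall a b d, lin (fun c => F a b c d)) /\
  (forall a c d, lin (fun b => F a b c d)) /\ (forall b c d, lin (fun a => F a b c d)).

Lemma lin_id V : lin (fun x : V => x).
Proof. by []. Qed.

Lemma lin_comp U V W (f : V -> W) (g : U -> V) : lin f -> lin g -> lin (fun x => f (g x)).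
Proof. by move=> hf hg a x y; rewrite hg hf. Qed.

Lemma lin_sum_fun U W (T : Type) (s : seq T) (G : T -> U -> W) :
  (forall p, lin (G p)) -> lin (fun x => \sum_(p <- s) G p x).
Proof.
move=> hG a x y; elim: s => [|p s IH]; first by rewrite !big_nil scaler0 addr0.
by rewrite !big_cons hG IH scalerDr addrACA.
Qed.

Lemma lin_sweedler_fun U V W (c : V -> seq (V * V)) (x : V) (F : U -> V -> V -> W) :
  (forall a b, lin (fun y => F y a b)) -> lin (fun y => sweedler c x (F y)).
Proof. by move=> hF; apply: lin_sum_fun => p; apply: hF. Qed.

Lemma lin_scale_const U W (c : k) (g : U -> W) : lin g -> lin (fun x => c *: g x).
Proof. by move=> hg a x y; rewrite hg scalerDr !scalerA mulrC. Qed.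

Lemma lin_scale_vec U W (g : U -> k^o) (v : W) : lin g -> lin (fun x => g x *: v).
Proof. by move=> hg a x y; rewrite hg scalerDl scalerA. Qed.

Lemma lin_bilin1 U V1 V2 W (b : V1 -> V2 -> W) (g : U -> V1) (c : V2) :
  bilin b -> lin g -> lin (fun x => b (g x) c).
Proof. by move=> [_ hb] hg; apply: (lin_comp (f := fun y => b y c)). Qed.

Lemma lin_bilin2 U V1 V2 W (b : V1 -> V2 -> W) (g : U -> V2) (c : V1) :
  bilin b -> lin g -> lin (fun x => b c (g x)).
Proof. by move=> [hb _] hg; apply: (lin_comp (f := b c)). Qed.

Lemma lin_trilin1 U V1 V2 V3 W (t : V1 -> V2 -> V3 -> W) (g : U -> V1) c d :
  trilin t -> lin g -> lin (fun x => t (g x) c d).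
Proof. by move=> [_ [_ ht]] hg; apply: (lin_comp (f := fun y => t y c d)). Qed.

Lemma lin_trilin2 U V1 V2 V3 W (t : V1 -> V2 -> V3 -> W) (g : U -> V2) c d :
  trilin t -> lin g -> lin (fun x => t c (g x) d).
Proof. by move=> [_ [ht _]] hg; apply: (lin_comp (f := fun y => t c y d)). Qed.

Lemma lin_trilin3 U V1 V2 V3 W (t : V1 -> V2 -> V3 -> W) (g : U -> V3) c d :
  trilin t -> lin g -> lin (fun x => t c d (g x)).
Proof. by move=> [ht _] hg; apply: (lin_comp (f := t c d)). Qed.

Lemma lin_quadlin1 U V1 V2 V3 V4 W (q : V1 -> V2 -> V3 -> V4 -> W) (g : U -> V1) c d e :
  quadlin q -> lin g -> lin (fun x => q (g x) c d e).
Proof. by move=> [_ [_ [_ hq]]] hg; apply: (lin_comp (f := fun y => q y c d e)). Qed.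

Lemma lin_quadlin2 U V1 V2 V3 V4 W (q : V1 -> V2 -> V3 -> V4 -> W) (g : U -> V2) c d e :
  quadlin q -> lin g -> lin (fun x => q c (g x) d e).
Proof. by move=> [_ [_ [hq _]]] hg; apply: (lin_comp (f := fun y => q c y d e)). Qed.

Lemma lin_quadlin3 U V1 V2 V3 V4 W (q : V1 -> V2 -> V3 -> V4 -> W) (g : U -> V3) c d e :
  quadlin q -> lin g -> lin (fun x => q c d (g x) e).
Proof. by move=> [_ [hq _]] hg; apply: (lin_comp (f := fun y => q c d y e)). Qed.

Lemma lin_quadlin4 U V1 V2 V3 V4 W (q : V1 -> V2 -> V3 -> V4 -> W) (g : U -> V4) c d e :
  quadlin q -> lin g -> lin (fun x => q c d e (g x)).
Proof. by move=> [hq _] hg; apply: (lin_comp (f := q c d e)). Qed.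

Lemma sum_tscale V W U (b : V -> W -> U) a (s : seq (V * W)) :
  (forall y, lin (fun x => b x y)) ->
  \sum_(p <- tscale a s) b p.1 p.2 = a *: \sum_(p <- s) b p.1 p.2.
Proof.
move=> hb; rewrite big_map scaler_sumr; apply: eq_bigr => p _ /=.
by rewrite (linZ (hb _)).
Qed.

Lemma lin_sweedler U V W (c : V -> seq (V * V)) (g : U -> V) (F : V -> V -> W) :
  tlin c -> bilin F -> lin g -> lin (fun x => sweedler c (g x) F).
Proof.
move=> hc hF hg a x y.
by rewrite /sweedler hg hc // big_cat /= sum_tscale //; case: hF.
Qed.

Lemma sweedlerZ V W (c : V -> seq (V * V)) (F : V -> V -> W) a x :
  tlin c -> bilin F -> sweedler c (a *: x) F = a *: sweedler c x F.
Proof. by move=> hc hF; rewrite (linZ (lin_sweedler hc hF (@lin_id V))). Qed.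

Lemma lin_sweedler_pull V W1 W2 (G : W1 -> W2) (c : V -> seq (V * V)) x (F : V -> V -> W1) :
  lin G -> G (sweedler c x F) = sweedler c x (fun a b => G (F a b)).
Proof. by move=> hG; rewrite /sweedler (lin_sum hG). Qed.

Lemma sweedler_exchange V1 V2 (M : nmodType) (c1 : V1 -> seq (V1 * V1))
    (c2 : V2 -> seq (V2 * V2)) x y (F : V1 -> V1 -> V2 -> V2 -> M) :
  sweedler c1 x (fun a b => sweedler c2 y (F a b)) =
  sweedler c2 y (fun u v => sweedler c1 x (fun a b => F a b u v)).
Proof. exact: exchange_big. Qed.

Lemma eq_sweedler V (M : nmodType) (c : V -> seq (V * V)) x (F G : V -> V -> M) :
  (forall a b, F a b = G a b) -> sweedler c x F = sweedler c x G.
Proof. by move=> h; apply: eq_bigr. Qed.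

End Linearity.

(* Proves [lin (fun x => e)] from the (multi)linearity facts that are
   hypotheses of the context; the sections below provide these as [Let]s. *)
Ltac lin_tac := cbv beta;
  solve [ apply: lin_id
  | match goal with
    | |- lin (fun x => \sum_(p <- _) _) => apply: lin_sum_fun => ?; lin_tac
    | H : tlin ?c |- lin (fun x => sweedler ?c (@?g x) ?F) =>
        apply: (@lin_sweedler _ _ _ _ c g F H); [multilin_tac | lin_tac]
    | |- lin (fun y => sweedler ?c ?x (@?F y)) => apply: lin_sweedler_fun => ? ?; lin_tac
    | |- lin (fun x => ?c *: (@?g x)) => apply: (@lin_scale_const _ _ _ c g); lin_tac
    | |- lin (fun x => (@?g x) *: ?v) => apply: (@lin_scale_vec _ _ _ g v); lin_tac
    | H : bilin ?b |- lin (fun x => ?b (@?g x) ?c) =>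
        apply: (@lin_bilin1 _ _ _ _ _ b g c H); lin_tac
    | H : bilin ?b |- lin (fun x => ?b ?c (@?g x)) =>
        apply: (@lin_bilin2 _ _ _ _ _ b g c H); lin_tac
    | H : trilin ?b |- lin (fun x => ?b (@?g x) ?c ?d) =>
        apply: (@lin_trilin1 _ _ _ _ _ _ b g c d H); lin_tac
    | H : trilin ?b |- lin (fun x => ?b ?c (@?g x) ?d) =>
        apply: (@lin_trilin2 _ _ _ _ _ _ b g c d H); lin_tac
    | H : trilin ?b |- lin (fun x => ?b ?c ?d (@?g x)) =>
        apply: (@lin_trilin3 _ _ _ _ _ _ b g c d H); lin_tac
    | H : quadlin ?b |- lin (fun x => ?b (@?g x) ?c ?d ?e) =>
        apply: (@lin_quadlin1 _ _ _ _ _ _ _ b g c d e H); lin_tac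
    | H : quadlin ?b |- lin (fun x => ?b ?c (@?g x) ?d ?e) =>
        apply: (@lin_quadlin2 _ _ _ _ _ _ _ b g c d e H); lin_tac
    | H : quadlin ?b |- lin (fun x => ?b ?c ?d (@?g x) ?e) =>
        apply: (@lin_quadlin3 _ _ _ _ _ _ _ b g c d e H); lin_tac
    | H : quadlin ?b |- lin (fun x => ?b ?c ?d ?e (@?g x)) =>
        apply: (@lin_quadlin4 _ _ _ _ _ _ _ b g c d e H); lin_tac
    | H : lin ?f |- lin (fun x => ?f (@?g x)) => apply: (@lin_comp _ _ _ _ f g H); lin_tac
    | H : lin ?f |- lin ?f => exact: H
    | |- lin ?f => lazymatch f with (fun _ => _) => fail | _ =>
         change (lin (fun z => f z)); lin_tac end
    end ]
with multilin_tac :=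
  repeat split; intros; lin_tac.

Section Coalgebra.
Variables (k : fieldType) (V : lmodType k) (c : V -> seq (V * V)) (e : V -> k).
Hypothesis hc : is_coalg c e.

Lemma coalg_cop_lin : tlin c. Proof. by case: hc => _ []. Qed.

Lemma sweedler_counitl (W : lmodType k) (G : V -> W) x :
  lin G -> sweedler c x (fun a b => e a *: G b) = G x.
Proof.
move=> hG; case: hc => _ [_ [_ /(_ x) [h _]]].
by rewrite -{2}h (lin_sum hG); apply: eq_bigr => p _; rewrite (linZ hG).
Qed.

Lemma sweedler_counitr (W : lmodType k) (G : V -> W) x :
  lin G -> sweedler c x (fun a b => e b *: G a) = G x.
Proof.
move=> hG; case: hc => _ [_ [_ /(_ x) [_ h]]].
by rewrite -{2}h (lin_sum hG); apply: eq_bigr => p _; rewrite (linZ hG).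
Qed.

Definition sweedler3 (M : nmodType) x (F : V -> V -> V -> M) : M :=
  sweedler c x (fun a b => sweedler c a (fun a1 a2 => F a1 a2 b)).
Definition sweedler4 (M : nmodType) x (F : V -> V -> V -> V -> M) : M :=
  sweedler3 x (fun a b d => sweedler c a (fun a1 a2 => F a1 a2 b d)).

Lemma sweedler_coassoc (W : lmodType k) (F : V -> V -> V -> W) x : trilin F ->
  sweedler c x (fun a b => sweedler c b (F a)) = sweedler3 x F.
Proof.
move=> hF; case: hc => _ [_ [/(_ x) h _]]; symmetry; have := h W F hF.
rewrite /sw3 /sw3r !big_flatten /= !big_map /sweedler3 /sweedler.
under eq_bigr do rewrite big_map. move=> ->.
by apply: eq_bigr => p _; rewrite big_map.
Qed.

Lemma sweedler4_coassoc2 (W : lmodType k) (F : V -> V -> V -> V -> W) x : quadlin F ->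
  sweedler3 x (fun a b d => sweedler c b (fun b1 b2 => F a b1 b2 d)) = sweedler4 x F.
Proof.
move=> hF; have cl := coalg_cop_lin; apply: eq_sweedler => t d.
by rewrite sweedler_coassoc //; multilin_tac.
Qed.

Lemma sweedler4_coassoc3 (W : lmodType k) (F : V -> V -> V -> V -> W) x : quadlin F ->
  sweedler3 x (fun a b d => sweedler c d (F a b)) = sweedler4 x F.
Proof.
move=> hF; have cl := coalg_cop_lin.
rewrite -(@sweedler_coassoc _ (fun a b d => sweedler c d (F a b))); last by multilin_tac.
transitivity (sweedler c x (fun a t => sweedler3 t (F a))).
  by apply: eq_sweedler => a t; apply: (sweedler_coassoc (F := F a)); multilin_tac.
rewrite sweedler_coassoc; last by multilin_tac.
exact: sweedler4_coassoc2.
Qed.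

Lemma sweedler4_coassoc1 (W : lmodType k) (F : V -> V -> V -> V -> W) x : quadlin F ->
  sweedler c x (fun a t => sweedler3 t (F a)) = sweedler4 x F.
Proof.
move=> hF; have cl := coalg_cop_lin.
rewrite sweedler_coassoc; last by multilin_tac.
by apply: eq_sweedler => s d; rewrite sweedler_coassoc //; multilin_tac.
Qed.

Lemma sum_sw3 (M : nmodType) x (G : V * V * V -> M) :
  \sum_(p <- sw3 c x) G p = sweedler3 x (fun a b d => G (a, b, d)).
Proof.
rewrite big_flatten big_map; apply: eq_bigr => p _.
by rewrite big_map.
Qed.

Lemma sum_sw4 (M : nmodType) x (G : V * V * V * V -> M) :
  \sum_(p <- sw4 c x) G p = sweedler4 x (fun a b d e => G (a, b, d, e)).
Proof.
rewrite big_flatten big_map sum_sw3; apply: eq_bigr => p _.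
by apply: eq_bigr => q _; rewrite big_map.
Qed.

Lemma sum_allpairs_sw3 (M : nmodType) (J : Type) x y
    (f : V * V * V -> V * V * V -> J) (G : J -> M) :
  \sum_(i <- [seq f p q | p <- sw3 c x, q <- sw3 c y]) G i =
  sweedler3 x (fun a1 a2 a3 => sweedler3 y (fun b1 b2 b3 => G (f (a1, a2, a3) (b1, b2, b3)))).
Proof. by rewrite big_allpairs_dep sum_sw3; apply: eq_bigr => p _; apply: eq_bigr => q _; rewrite sum_sw3. Qed.

End Coalgebra.

(* A linear left inverse of f is built by Zorn's lemma on the graphs
   G \subset W * V of partial linear left inverses: G contains the transposed
   graph of f, is closed under linear combinations, and (0, v) \in G forces
   v = 0.  A maximal such graph is total. *)
Section LinearLeftInverse.
Local Open Scope classical_set_scope.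
Variables (k : fieldType) (V W : lmodType k) (f : V -> W).
Hypotheses (fl : lin f) (finj : injective f).

Definition transposed_graph : set (W * V) := fun p => p.1 = f p.2.

Definition linear_functional_graph (G : set (W * V)) : Prop :=
  (forall a w v w' v', G (w, v) -> G (w', v') -> G (a *: w + w', a *: v + v')) /\
  (forall v, G (0, v) -> v = 0).

Definition partial_left_inverse (X : set (W * V)) : Prop :=
  linear_functional_graph (transposed_graph `|` X).

Lemma transposed_graph_functional : linear_functional_graph transposed_graph.
Proof.
rewrite /transposed_graph; split=> [a w v w' v' /= -> ->|v /= h]; first by rewrite fl.
by apply: finj; rewrite -h (lin0 fl).
Qed.

Lemma partial_left_inverse_chain (F : set (set (W * V))) :
  F `<=` partial_left_inverse -> total_on F subset ->
  partial_left_inverse (\bigcup_(X in F) X).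
Proof.
move=> FP Ftot; split.
- have comb X a w v w' v' : F X -> (transposed_graph `|` X) (w, v) ->
      (transposed_graph `|` X) (w', v') ->
      (transposed_graph `|` \bigcup_(X in F) X) (a *: w + w', a *: v + v').
    move=> FX h1 h2; have [hX _] := FP X FX.
    by case: (hX a w v w' v' h1 h2) => h; [left | right; exists X].
  move=> a w v w' v' [h1|[X FX h1]] [h2|[Y FY h2]].
  + by left; apply: transposed_graph_functional.1.
  + by apply: (comb Y) => //; [left | right].
  + by apply: (comb X) => //; [right | left].
  + case: (Ftot X Y FX FY) => XY.
      by apply: (comb Y) => //; right => //; apply: XY.
    by apply: (comb X) => //; right => //; apply: XY.
- move=> v [h|[X FX h]]; first exact: transposed_graph_functional.2.
  by apply: (FP X FX).2; right.
Qed.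

Lemma maximal_partial_left_inverse_total (X : set (W * V)) :
  partial_left_inverse X -> (forall Y, X `<` Y -> ~ partial_left_inverse Y) ->
  forall w, exists v, (transposed_graph `|` X) (w, v).
Proof.
set G := transposed_graph `|` X => -[Gcl Gz] Xmax w; apply/not_existsP => hw.
have G00 : G (0, 0) by left; rewrite /transposed_graph /= (lin0 fl).
pose G' : set (W * V) := fun p => exists c g, p.1 = g + c *: w /\ G (g, p.2).
have G'G : forall p, G p -> G' p.
  by move=> [w1 v1] h; exists 0, w1; rewrite scale0r addr0.
have G0G' : forall p, (transposed_graph `|` G') p -> G' p.
  by move=> p [h|//]; apply: G'G; left.
apply: (Xmax G'); first split.
- by move=> p Xp; apply: G'G; right.
- move=> G'X; apply: (hw 0); right; apply: G'X.
  by exists 1, 0; rewrite /= add0r scale1r.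
split.
- move=> a w1 v1 w2 v2 /G0G' [c1 [g1 [/= e1 h1]]] /G0G' [c2 [g2 [/= e2 h2]]].
  right; exists (a * c1 + c2), (a *: g1 + g2); split; last exact: Gcl.
  by rewrite /= e1 e2 scalerDr scalerDl scalerA addrACA.
- move=> v /G0G' [c [g [/= e h]]].
  have [c0|cn0] := eqVneq c 0.
    by move: e; rewrite c0 scale0r addr0 => e; apply: Gz; rewrite e.
  exfalso; apply: (hw (- c^-1 *: v)).
  have -> : w = - c^-1 *: g + 0.
    rewrite addr0; apply: (@scalerI _ _ c) => //.
    rewrite scalerA mulrN mulfV // scaleN1r.
    by apply/eqP; rewrite -addr_eq0 addrC -e.
  by rewrite -[_ *: v]addr0; apply: Gcl.
Qed.

Lemma lin_left_inverse : exists g : W -> V, lin g /\ forall x, g (f x) = x.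
Proof.
have [X [[Gcl Gz] Xmax]] := Zorn_bigcup partial_left_inverse_chain.
set G := transposed_graph `|` X.
have Gtot := maximal_partial_left_inverse_total (conj Gcl Gz) Xmax.
have Gfun w v v' : G (w, v) -> G (w, v') -> v = v'.
  move=> h h'; have := Gcl (-1) _ _ _ _ h h'.
  by rewrite !scaleN1r addNr => /Gz/eqP; rewrite addrC subr_eq0 => /eqP.
pose g w := xget 0 [set v | G (w, v)].
have gG w : G (w, g w).
  by rewrite /g; case: xgetP => // hn; have [v hv] := Gtot w; case: (hn v).
exists g; split.
- by move=> a x y; apply: (Gfun (a *: x + y)); [exact: gG | apply: Gcl; apply: gG].
- by move=> x; apply: (Gfun (f x)); [apply: gG | left].
Qed.

End LinearLeftInverse.

Lemma teq2_inj (k : fieldType) (V W : lmodType k) (f : V -> W) (s t : seq (V * V)) :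
  lin f -> injective f ->
  teq2 [seq (f p.1, f p.2) | p <- s] [seq (f p.1, f p.2) | p <- t] -> teq2 s t.
Proof.
move=> fl finj h U B hB; have [g [gl gf]] := lin_left_inverse fl finj.
have hB' : bilin (fun u v => B (g u) (g v)) by split=> ?; lin_tac.
have := h U _ hB'; rewrite !big_map /=.
by under eq_bigr do rewrite !gf; under [in RHS]eq_bigr do rewrite !gf.
Qed.

Section HopfAlgebra.
Variables (k : fieldType) (H : lmodType k) (mul : H -> H -> H) (one : H).
Variables (cop : H -> seq (H * H)) (eps : H -> k) (S : H -> H).
Hypothesis hH : is_hopf mul one cop eps S.

Lemma hopf_mul_bilin : bilin mul. Proof. by case: hH => [[]]. Qed.
Lemma hopf_mulA x y z : mul x (mul y z) = mul (mul x y) z. Proof. by case: hH => [[_ []]]. Qed.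
Lemma hopf_mul1l x : mul one x = x. Proof. by case: hH => [[_ [_ h]]] _; case: (h x). Qed.
Lemma hopf_mul1r x : mul x one = x. Proof. by case: hH => [[_ [_ h]]] _; case: (h x). Qed.
Lemma hopf_coalg : is_coalg cop eps. Proof. by case: hH => _ []. Qed.
Lemma hopf_antipode_lin : lin S. Proof. by case: hH => _ [_ [_ [_ []]]]. Qed.

Lemma hopf_antipoder x : sweedler cop x (fun a b => mul a (S b)) = eps x *: one.
Proof. by case: hH => _ [_ [_ [_ [_ /(_ x) []]]]]. Qed.

Lemma hopf_antipodel x : sweedler cop x (fun a b => mul (S a) b) = eps x *: one.
Proof. by case: hH => _ [_ [_ [_ [_ /(_ x) []]]]]. Qed.

Lemma sweedler_hopf_one (W : lmodType k) (B : H -> H -> W) :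
  bilin B -> sweedler cop one B = B one one.
Proof. by case: hH => _ [_ [[_ [_ h1]] _]] hB; rewrite /sweedler (h1 _ _ hB) big_seq1. Qed.

Lemma sweedler_hopf_mul (W : lmodType k) (B : H -> H -> W) x y : bilin B ->
  sweedler cop (mul x y) B = sweedler cop x (fun u v => sweedler cop y (fun w z => B (mul u w) (mul v z))).
Proof. by case: hH => _ [_ [_ [hM _]]] hB; rewrite /sweedler (hM x y _ _ hB) big_allpairs_dep. Qed.

Let mul_bilin := hopf_mul_bilin.
Let cop_lin := coalg_cop_lin hopf_coalg.
Let S_lin := hopf_antipode_lin.

Section AntipodeAntiComultiplicative.
Variables (W : lmodType k) (B : H -> H -> W).
Hypothesis hB : bilin B.

(* Summed over h_1 (x) h_2 (x) h_3 (x) h_4, this reduces to S(h_2) (x) S(h_1)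
   by the antipode axiom for S(h_1) h_2, and to S(h)_1 (x) S(h)_2 by the one
   for h_2 S(h_3). *)
Definition antipode_expansion (a b c d : H) : W :=
  sweedler cop (S a) (fun u v => sweedler cop b (fun w z =>
    B (mul (mul u w) (S d)) (mul (mul v z) (S c)))).

Lemma antipode_expansion_quadlin : quadlin antipode_expansion.
Proof. by rewrite /antipode_expansion; multilin_tac. Qed.

Lemma sweedler4_antipode_expansion_l h :
  sweedler4 cop h antipode_expansion = sweedler cop h (fun a b => B (S b) (S a)).
Proof.
have hco := hopf_coalg.
transitivity (sweedler3 cop h (fun t c d => eps t *: B (S d) (S c))).
  apply: eq_sweedler => s d; apply: eq_sweedler => t c.
  transitivity (sweedler cop t (fun a b => sweedler cop (mul (S a) b)
                  (fun u v => B (mul u (S d)) (mul v (S c))))).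
    by apply: eq_sweedler => a b; rewrite sweedler_hopf_mul //; multilin_tac.
  rewrite -(lin_sweedler_pull (G := fun y => sweedler cop y
              (fun u v => B (mul u (S d)) (mul v (S c))))); last by lin_tac.
  by rewrite hopf_antipodel sweedlerZ ?sweedler_hopf_one ?hopf_mul1l //; multilin_tac.
apply: eq_sweedler => s d.
by rewrite (sweedler_counitl hco (G := fun t => B (S d) (S t))) //; lin_tac.
Qed.

Lemma sweedler4_antipode_expansion_r h :
  sweedler4 cop h antipode_expansion = sweedler cop (S h) B.
Proof.
have hco := hopf_coalg.
have hF := antipode_expansion_quadlin.
rewrite -(sweedler4_coassoc1 hco) //.
transitivity (sweedler cop h (fun a t => eps t *: sweedler cop (S a) B)); last first.
  by rewrite (sweedler_counitr hco (G := fun a => sweedler cop (S a) B)) //; lin_tac.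
apply: eq_sweedler => a t; rewrite /antipode_expansion.
transitivity (sweedler cop (S a) (fun u v => sweedler3 cop t (fun b c d =>
  sweedler cop b (fun w z => B (mul (mul u w) (S d)) (mul (mul v z) (S c)))))).
  by rewrite /sweedler3 [RHS]sweedler_exchange; apply: eq_sweedler => u v; rewrite sweedler_exchange.
rewrite (lin_sweedler_pull (G := fun y => eps t *: y)); last by lin_tac.
apply: eq_sweedler => u v.
set G := fun w z c d => B (mul (mul u w) (S d)) (mul (mul v z) (S c)).
rewrite -[LHS]/(sweedler4 cop t G) -(sweedler4_coassoc2 hco (F := G)); last first.
  by rewrite /G; multilin_tac.
transitivity (sweedler3 cop t (fun w s d => eps s *: B (mul (mul u w) (S d)) v)).
  apply: eq_sweedler => r d; apply: eq_sweedler => w s.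
  transitivity (sweedler cop s (fun z c => B (mul (mul u w) (S d)) (mul v (mul z (S c))))).
    by apply: eq_sweedler => z c; rewrite hopf_mulA.
  rewrite -(lin_sweedler_pull (G := fun y => B (mul (mul u w) (S d)) (mul v y))); last by lin_tac.
  by rewrite hopf_antipoder (bilinZr mul_bilin) hopf_mul1r (bilinZr hB).
transitivity (sweedler cop t (fun r d => B (mul u (mul r (S d))) v)).
  apply: eq_sweedler => r d.
  by rewrite (sweedler_counitr hco (G := fun w => B (mul (mul u w) (S d)) v)) ?hopf_mulA //; lin_tac.
rewrite -(lin_sweedler_pull (G := fun y => B (mul u y) v)); last by lin_tac.
by rewrite hopf_antipoder (bilinZr mul_bilin) hopf_mul1r (bilinZl hB).
Qed.

End AntipodeAntiComultiplicative.

Lemma sweedler_antipode (W : lmodType k) (B : H -> H -> W) h : bilin B ->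
  sweedler cop (S h) B = sweedler cop h (fun a b => B (S b) (S a)).
Proof.
move=> hB.
by rewrite -sweedler4_antipode_expansion_r // sweedler4_antipode_expansion_l.
Qed.

End HopfAlgebra.

Section RotaBaxterToPostHopf.
Variables (k : fieldType) (O : RBData k).
Hypothesis hO : in_Cprime O.

Local Notation H := (Hc O). Local Notation K := (Kc O).
Local Notation mH := (Hmul O). Local Notation oneH := (Hone O).
Local Notation cH := (Hcop O). Local Notation eH := (Heps O). Local Notation SH := (HS O).
Local Notation mK := (Kmul O). Local Notation oneK := (Kone O).
Local Notation cK := (Kcop O). Local Notation eK := (Keps O). Local Notation SK := (KS O).
Local Notation act := (Kact O). Local Notation R := (Rop O).

Lemma Cprime_hopf : is_hopf mH oneH cH eH SH. Proof. by case: hO. Qed.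
Lemma Cprime_YDHopf : is_YDHopf_monoid mH oneH cH eH SH act (@Kcoact _ O) mK oneK cK eK SK.
Proof. by case: hO => _ []. Qed.
Lemma Cprime_R_coalg_hom : coalg_hom cK eK cH eH R. Proof. by case: hO => _ [_ []]. Qed.
Lemma Cprime_R_inj : injective R. Proof. by case: hO => _ [_ [_ []]]. Qed.
Lemma Cprime_RB1 : RB1 O. Proof. by case: hO => _ [_ [_ [_ []]]]. Qed.
Lemma Cprime_RB2 : RB2 O. Proof. by case: hO => _ [_ [_ [_ []]]]. Qed.

Let hH := Cprime_hopf.
Let hY := Cprime_YDHopf.

Let act_bilin : bilin act. Proof. by case: hY => [[]]. Qed.
Lemma act1 v : act oneH v = v. Proof. by case: hY => [[_ []]]. Qed.
Lemma actM a b v : act (mH a b) v = act a (act b v). Proof. by case: hY => [[_ [_ []]]]. Qed.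
Let mK_bilin : bilin mK. Proof. by case: hY => _ [[]]. Qed.
Lemma mK1l x : mK oneK x = x. Proof. by case: hY => _ [[_ [_ h]]] _; case: (h x). Qed.
Lemma K_coalg : is_coalg cK eK. Proof. by case: hY => _ [_ []]. Qed.

Lemma act_mulK h a b : act h (mK a b) = sweedler cH h (fun h1 h2 => mK (act h1 a) (act h2 b)).
Proof. by case: hY => _ [_ [_ []]]. Qed.
Lemma act_oneK h : act h oneK = eH h *: oneK.
Proof. by case: hY => _ [_ [_ [_ [_ []]]]]. Qed.
Lemma cop_act h a : teq2 (cK (act h a)) [seq (act p.1 q.1, act p.2 q.2) | p <- cH h, q <- cK a].
Proof. by case: hY => _ [_ [_ [_ [_ [_ [_ []]]]]]]. Qed.
Lemma eps_act h a : eK (act h a) = eH h * eK a.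
Proof. by case: hY => _ [_ [_ [_ [_ [_ [_ [_ [_ []]]]]]]]]. Qed.
Lemma eK1 : eK oneK = 1.
Proof. by case: hY => _ [_ [_ [_ [_ [_ [_ [_ [_ [_ [_ [[_ []]]]]]]]]]]]]. Qed.
Lemma cK1 : teq2 (cK oneK) [:: (oneK, oneK)].
Proof. by case: hY => _ [_ [_ [_ [_ [_ [_ [_ [_ [_ [_ [[_ []]]]]]]]]]]]]. Qed.
Lemma cop_mulK_braided a b : teq2 (cK (mK a b))
  (flatten [seq [seq (mK p.1 (act r.1 q.1), mK r.2 q.2)
                  | r <- @Kcoact _ O p.2, q <- cK b] | p <- cK a]).
Proof. by case: hY => _ [_ [_ [_ [_ [_ [_ [_ [_ [_ [_ [_ []]]]]]]]]]]]. Qed.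
Let SK_lin : lin SK.
Proof. by case: hY => _ [_ [_ [_ [_ [_ [_ [_ [_ [_ [_ [_ [_ [[]]]]]]]]]]]]]]. Qed.
Lemma SK_antipoder x : sweedler cK x (fun a b => mK a (SK b)) = eK x *: oneK.
Proof. by case: hY => _ [_ [_ [_ [_ [_ [_ [_ [_ [_ [_ [_ [_ [[_ /(_ x) []]]]]]]]]]]]]]]. Qed.

Let R_lin : lin R. Proof. by case: Cprime_R_coalg_hom. Qed.
Lemma eps_R x : eH (R x) = eK x. Proof. by case: Cprime_R_coalg_hom => _ []. Qed.

Let mH_bilin := hopf_mul_bilin hH.
Let SH_lin := hopf_antipode_lin hH.
Let cK_lin := coalg_cop_lin K_coalg.

Lemma sweedler_R (W : lmodType k) (F : H -> H -> W) x : bilin F ->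
  sweedler cH (R x) F = sweedler cK x (fun a b => F (R a) (R b)).
Proof.
case: Cprime_R_coalg_hom => _ [cR _] hF.
by rewrite /sweedler (cR x _ _ hF) big_map.
Qed.

Lemma sweedler_act (W : lmodType k) (B : K -> K -> W) h a : bilin B ->
  sweedler cK (act h a) B =
  sweedler cH h (fun h1 h2 => sweedler cK a (fun a1 a2 => B (act h1 a1) (act h2 a2))).
Proof. by move=> hB; rewrite /sweedler (cop_act h a hB) big_allpairs_dep. Qed.

Lemma sweedler_oneK (W : lmodType k) (B : K -> K -> W) : bilin B -> sweedler cK oneK B = B oneK oneK.
Proof. by move=> hB; rewrite /sweedler (cK1 hB) big_seq1. Qed.

Lemma R_one : R oneK = oneH.
Proof.
have idem : mH (R oneK) (R oneK) = R oneK.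
  rewrite Cprime_RB1; congr R.
  rewrite -[LHS]/(sweedler cK oneK (fun a b => mK a (act (R b) oneK))).
  rewrite sweedler_oneK; last by multilin_tac.
  by rewrite mK1l act_oneK eps_R eK1 scale1r.
have inv : mH (SH (R oneK)) (R oneK) = oneH.
  have := hopf_antipodel hH (R oneK); rewrite sweedler_R; last by multilin_tac.
  by rewrite sweedler_oneK ?eps_R ?eK1 ?scale1r //; multilin_tac.
by rewrite -[LHS](hopf_mul1l hH) -inv -(hopf_mulA hH) idem.
Qed.

Definition actR (x y : K) : K := act (R x) y.
Definition betaR (x y : K) : K := act (SH (R x)) y.
Definition bulR (a b : K) : K := sweedler cK a (fun a1 a2 => mK a1 (actR a2 b)).
Definition SR (x : K) : K := sweedler cK x (fun a b => betaR a (SK b)).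

Lemma actR_coalg_hom2 : coalg_hom2 cK eK actR.
Proof.
split; first by rewrite /actR; multilin_tac.
split=> [x y U B hB|x y]; last by rewrite /actR eps_act eps_R.
rewrite big_allpairs_dep.
by rewrite -[LHS]/(sweedler cK (act (R x) y) B) sweedler_act // sweedler_R //; multilin_tac.
Qed.

Lemma actR_mulK x y z : actR x (mK y z) = \sum_(p <- cK x) mK (actR p.1 y) (actR p.2 z).
Proof. by rewrite /actR act_mulK sweedler_R //; multilin_tac. Qed.

Lemma actR_actR x y z : actR x (actR y z) = actR (bulR x y) z.
Proof. by rewrite /actR -actM Cprime_RB1. Qed.

Lemma actR_conv_inv : conv_inv cK eK actR betaR.
Proof.
rewrite /actR /betaR; split; first by multilin_tac.
move=> x y; split.
- transitivity (sweedler cH (R x) (fun a b => act (mH a (SH b)) y)).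
    by rewrite sweedler_R; [apply: eq_bigr => p _; rewrite actM | multilin_tac].
  rewrite -(lin_sweedler_pull (G := fun h => act h y)); last by lin_tac.
  by rewrite (hopf_antipoder hH) eps_R (bilinZl act_bilin) act1.
- transitivity (sweedler cH (R x) (fun a b => act (mH (SH a) b) y)).
    by rewrite sweedler_R; [apply: eq_bigr => p _; rewrite actM | multilin_tac].
  rewrite -(lin_sweedler_pull (G := fun h => act h y)); last by lin_tac.
  by rewrite (hopf_antipodel hH) eps_R (bilinZl act_bilin) act1.
Qed.

Lemma cop_mulK x y : teq2 (cK (mK x y))
  [seq (mK p.1.1.1 (actR p.1.1.2 (betaR p.2 q.1)), mK p.1.2 q.2) | p <- sw4 cK x, q <- cK y].
Proof.
move=> U B hB.
rewrite (cop_mulK_braided x y hB) big_flatten big_map big_allpairs_dep sum_sw4 /=.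
set G := fun a b c d => sweedler cK y (fun y1 y2 =>
  B (mK a (act (mH (R b) (SH (R d))) y1)) (mK c y2)).
transitivity (sweedler cK x (fun a t => sweedler3 cK t (G a))).
  by apply: eq_bigr => p _; rewrite big_allpairs_dep /Kcoact big_map sum_sw3.
rewrite (sweedler4_coassoc1 K_coalg); last by rewrite /G; multilin_tac.
apply: eq_sweedler => t d; apply: eq_sweedler => s c; apply: eq_sweedler => a b.
by apply: eq_bigr => q _; rewrite /actR /betaR actM.
Qed.

Lemma R_bullet a b : R (bulR a b) = mH (R a) (R b).
Proof. by rewrite Cprime_RB1. Qed.

Lemma sweedler_bullet_SR x : sweedler cK x (fun a b => bulR a (SR b)) = eK x *: oneK.
Proof.
set G := fun a1 a2 b1 b2 => mK a1 (act (mH (R a2) (SH (R b1))) (SK b2)).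
have hG : quadlin G by rewrite /G; multilin_tac.
transitivity (sweedler3 cK x (fun a1 a2 b => sweedler cK b (G a1 a2))).
  apply: eq_sweedler => a b; apply: eq_sweedler => a1 a2.
  rewrite /SR /actR (lin_sweedler_pull (G := act (R a2))); last by lin_tac.
  rewrite (lin_sweedler_pull (G := mK a1)); last by lin_tac.
  by apply: eq_sweedler => b1 b2; rewrite /G /betaR actM.
rewrite (sweedler4_coassoc3 K_coalg) // -(sweedler4_coassoc2 K_coalg) //.
transitivity (sweedler3 cK x (fun a s d => eK s *: mK a (SK d))).
  apply: eq_sweedler => t d; apply: eq_sweedler => a s; rewrite /G.
  rewrite -(lin_sweedler_pull (G := fun h => mK a (act h (SK d)))); last by lin_tac.
  rewrite -(sweedler_R (F := fun u v => mH u (SH v))); last by multilin_tac.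
  by rewrite (hopf_antipoder hH) eps_R (bilinZl act_bilin) act1 (bilinZr mK_bilin).
rewrite -SK_antipoder; apply: eq_sweedler => t d.
by rewrite (sweedler_counitr K_coalg (G := fun a => mK a (SK d))) //; lin_tac.
Qed.

Lemma R_SR x : R (SR x) = SH (R x).
Proof.
have R_bullet_SR t : sweedler cK t (fun a b => mH (R a) (R (SR b))) = eK t *: oneH.
  transitivity (R (sweedler cK t (fun a b => bulR a (SR b)))).
    by rewrite (lin_sweedler_pull (G := R)) //; apply: eq_sweedler => a b; rewrite R_bullet.
  by rewrite sweedler_bullet_SR (linZ R_lin) R_one.
symmetry; rewrite -(sweedler_counitr K_coalg (G := fun a => SH (R a))); last by lin_tac.
transitivity (sweedler cK x (fun a t => mH (SH (R a))
                (sweedler cK t (fun b c => mH (R b) (R (SR c)))))).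
  by apply: eq_sweedler => a t; rewrite R_bullet_SR (bilinZr mH_bilin) (hopf_mul1r hH).
transitivity (sweedler3 cK x (fun a b c => mH (SH (R a)) (mH (R b) (R (SR c))))).
  rewrite -(sweedler_coassoc K_coalg); last by rewrite /SR /betaR; multilin_tac.
  apply: eq_sweedler => a t.
  by rewrite (lin_sweedler_pull (G := mH (SH (R a)))) //; lin_tac.
transitivity (sweedler cK x (fun t c => eK t *: R (SR c))); last first.
  by rewrite (sweedler_counitl K_coalg (G := fun c => R (SR c))) //; rewrite /SR /betaR; lin_tac.
apply: eq_sweedler => t c.
transitivity (mH (sweedler cK t (fun a b => mH (SH (R a)) (R b))) (R (SR c))).
  rewrite (lin_sweedler_pull (G := fun y => mH y (R (SR c)))); last by lin_tac.
  by apply: eq_sweedler => a b; rewrite (hopf_mulA hH).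
rewrite -(sweedler_R (F := fun u v => mH (SH u) v)); last by multilin_tac.
by rewrite (hopf_antipodel hH) eps_R (bilinZl mH_bilin) (hopf_mul1l hH).
Qed.

Lemma cop_SR x : teq2 (cK (SR x)) [seq (SR p.2, SR p.1) | p <- cK x].
Proof.
apply: (teq2_inj R_lin Cprime_R_inj) => U B hB; rewrite !big_map /=.
rewrite -[LHS]/(sweedler cK (SR x) (fun a b => B (R a) (R b))).
rewrite -sweedler_R // R_SR (sweedler_antipode hH) // sweedler_R; last by multilin_tac.
by apply: eq_bigr => p _; rewrite !R_SR.
Qed.

Definition rb2_term (u1 v1 u2 v2 : K) : H :=
  mH (mH (SH (R (act (R u1) v1))) (R u2)) (R v2).

Lemma rb2_term_quadlin : quadlin rb2_term.
Proof. by rewrite /rb2_term; multilin_tac. Qed.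

Lemma RB2_sweedler (W : lmodType k) (D : H -> H -> W) x y : bilin D ->
  sweedler3 cK x (fun a1 a2 a3 => sweedler3 cK y (fun b1 b2 b3 =>
    D (rb2_term a1 b1 a2 b2) (R (act (R a3) b3)))) =
  sweedler3 cK x (fun a1 a2 a3 => sweedler3 cK y (fun b1 b2 b3 =>
    D (rb2_term a2 b2 a3 b3) (R (act (R a1) b1)))).
Proof. by move=> hD; have := Cprime_RB2 x y hD; rewrite !sum_allpairs_sw3. Qed.

Lemma R_lharp x y : R (lharp mK cK SK actR betaR x y) =
  sweedler cK x (fun p1 p2 => sweedler cK y (fun q1 q2 => rb2_term p1 q1 p2 q2)).
Proof.
rewrite /lharp (lin_sum R_lin); apply: eq_bigr => p _.
rewrite (lin_sum R_lin); apply: eq_bigr => q _.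
by rewrite -[bullet _ _ _ _ _]/(bulR _ _) -[Sharp _ _ _ _]/(SR _) !R_bullet R_SR.
Qed.

Local Notation lharpR := (lharp mK cK SK actR betaR).

Lemma sweedler_lharp_actR (W : lmodType k) (D : H -> H -> W) x y : bilin D ->
  sweedler cK x (fun p1 p2 => sweedler cK y (fun q1 q2 => D (R (lharpR p1 q1)) (R (actR p2 q2)))) =
  sweedler3 cK x (fun a1 a2 a3 => sweedler3 cK y (fun b1 b2 b3 =>
    D (rb2_term a1 b1 a2 b2) (R (act (R a3) b3)))).
Proof.
move=> hD; have hT := rb2_term_quadlin; apply: eq_sweedler => p1 p2.
transitivity (sweedler cK y (fun q1 q2 => sweedler cK p1 (fun u1 u2 =>
  sweedler cK q1 (fun v1 v2 => D (rb2_term u1 v1 u2 v2) (R (act (R p2) q2)))))).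
  apply: eq_sweedler => q1 q2; rewrite R_lharp.
  rewrite (lin_sweedler_pull (G := fun h => D h (R (act (R p2) q2)))); last by lin_tac.
  by apply: eq_sweedler => u1 u2; rewrite (lin_sweedler_pull (G := fun h => D h _)) //; lin_tac.
exact: sweedler_exchange.
Qed.

Lemma sweedler_actR_lharp (W : lmodType k) (D : H -> H -> W) x y : bilin D ->
  sweedler cK x (fun p1 p2 => sweedler cK y (fun q1 q2 => D (R (lharpR p2 q2)) (R (actR p1 q1)))) =
  sweedler3 cK x (fun a1 a2 a3 => sweedler3 cK y (fun b1 b2 b3 =>
    D (rb2_term a2 b2 a3 b3) (R (act (R a1) b1)))).
Proof.
move=> hD; have hT := rb2_term_quadlin.
rewrite -(sweedler_coassoc K_coalg); last by rewrite /sweedler3; multilin_tac.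
apply: eq_sweedler => p1 p2.
transitivity (sweedler cK y (fun q1 q2 => sweedler cK p2 (fun u1 u2 =>
  sweedler cK q2 (fun v1 v2 => D (rb2_term u1 v1 u2 v2) (R (act (R p1) q1)))))).
  apply: eq_sweedler => q1 q2; rewrite R_lharp.
  rewrite (lin_sweedler_pull (G := fun h => D h (R (act (R p1) q1)))); last by lin_tac.
  by apply: eq_sweedler => u1 u2; rewrite (lin_sweedler_pull (G := fun h => D h _)) //; lin_tac.
rewrite sweedler_exchange; apply: eq_sweedler => u1 u2.
by rewrite (sweedler_coassoc K_coalg) //; multilin_tac.
Qed.

Lemma actR_lharp_swap x y : teq2
  [seq (actR p.1 q.1, lharpR p.2 q.2) | p <- cK x, q <- cK y]
  [seq (actR p.2 q.2, lharpR p.1 q.1) | p <- cK x, q <- cK y].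
Proof.
apply: (teq2_inj R_lin Cprime_R_inj) => U B hB; rewrite !big_map !big_allpairs_dep /=.
pose D h h' := B h' h; have hD : bilin D by case: hB.
rewrite -[LHS]/(sweedler cK x (fun p1 p2 => sweedler cK y (fun q1 q2 =>
  D (R (lharpR p2 q2)) (R (actR p1 q1))))).
rewrite -[RHS]/(sweedler cK x (fun p1 p2 => sweedler cK y (fun q1 q2 =>
  D (R (lharpR p1 q1)) (R (actR p2 q2))))).
by rewrite sweedler_actR_lharp // sweedler_lharp_actR // RB2_sweedler.
Qed.

Lemma Rprime_YDPH : is_YDPH (Rprime O).
Proof.
have [_ [K_alg [_ [_ [_ [_ [_ [_ [_ [_ [_ [K_unit [_ [K_antipode _]]]]]]]]]]]]]] := hY.
split=> //; split; first exact: K_coalg.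
split=> //; split; first exact: actR_coalg_hom2.
split; first exact: actR_mulK.
split; first exact: actR_actR.
split=> //; exists betaR.
split; first exact: actR_conv_inv.
split; first exact: cop_mulK.
split; [exact: cop_SR | exact: actR_lharp_swap].
Qed.

Lemma Cmor_of_YDPH_hom (P : YDPHData k) (g : Pc P -> K) :
  YDPH_hom P (Rprime O) g -> Cmor (Lobj P) O (fun x => R (g x)) g.
Proof.
move=> [[gl [gm g1]] [[_ [gc ge]] gact]] /=.
have gR : lin (fun x => R (g x)) by lin_tac.
split.
  split=> //; split=> [x y /=|]; last by rewrite /= g1 R_one.
  rewrite /bullet (lin_sum gl) -R_bullet; congr R.
  rewrite /bulR /sweedler (gc x _ (fun a b => mK a (act (R b) (g y)))); last by multilin_tac.
  by rewrite big_map; apply: eq_bigr => p _; rewrite gm gact.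
split.
  split=> //; split=> [x U B hB|x]; last by rewrite eps_R; apply: ge.
  rewrite big_map -[LHS]/(sweedler cH (R (g x)) B) sweedler_R //.
  by rewrite /sweedler (gc x _ (fun a b => B (R a) (R b))) ?big_map //; multilin_tac.
by do 2!(split; first by split).
Qed.

End RotaBaxterToPostHopf.

Lemma Cmor_YDPH_hom (k : fieldType) (O1 O2 : RBData k) (f : Hc O1 -> Hc O2) (g : Kc O1 -> Kc O2) :
  Cmor O1 O2 f g -> YDPH_hom (Rprime O1) (Rprime O2) g.
Proof. by move=> [_ [_ [ga [gc [fR gact]]]]]; do 2!split=> //; move=> x y /=; rewrite gact fR. Qed.

Lemma Cmor_Lobj_YDPH_hom (k : fieldType) (P : YDPHData k) (O : RBData k)
    (f : Pc P -> Hc O) (g : Pc P -> Kc O) :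
  Cmor (Lobj P) O f g -> YDPH_hom P (Rprime O) g.
Proof. exact: Cmor_YDPH_hom. Qed.

Lemma Cmor_Lobj_fst (k : fieldType) (P : YDPHData k) (O : RBData k)
    (f : Pc P -> Hc O) (g : Pc P -> Kc O) :
  Cmor (Lobj P) O f g -> forall x, f x = Rop O (g x).
Proof. by move=> [_ [_ [_ [_ [fR _]]]]] x; rewrite -fR. Qed.

Theorem proposition4 (k : fieldType) :
  (forall O : RBData k, in_Cprime O -> is_YDPH (Rprime O)) /\
  (forall (O1 O2 : RBData k) (f : Hc O1 -> Hc O2) (g : Kc O1 -> Kc O2),
      in_Cprime O1 -> in_Cprime O2 -> Cmor O1 O2 f g ->
      YDPH_hom (Rprime O1) (Rprime O2) g) /\
  (forall (P : YDPHData k) (O : RBData k), is_YDPH P -> in_Cprime O ->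
     (forall (f : Pc P -> Hc O) (g : Pc P -> Kc O),
         Cmor (Lobj P) O f g -> YDPH_hom P (Rprime O) g) /\
     (forall g : Pc P -> Kc O,
         YDPH_hom P (Rprime O) g -> Cmor (Lobj P) O (fun x => Rop O (g x)) g) /\
     (forall (f : Pc P -> Hc O) (g : Pc P -> Kc O),
         Cmor (Lobj P) O f g -> forall x, f x = Rop O (g x))).
Proof.
split; first exact: Rprime_YDPH.
split; first by move=> O1 O2 f g _ _; apply: Cmor_YDPH_hom.
move=> P O _ hO; split; first exact: Cmor_Lobj_YDPH_hom.
split; first exact: Cmor_of_YDPH_hom.
exact: Cmor_Lobj_fst.
Qed.
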